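(* None of seriality, reflexivity, Euclideanity and convergency is definable in $\mathcal{L}(\nabla,\bullet)$: for each of these properties $P$ there is no formula $\phi\in\mathcal{L}(\nabla,\bullet)$ such that for every frame $\mathcal{F}$, $\mathcal{F}\vDash\phi$ iff $\mathcal{F}$ has property $P$.
   Context: Fix a nonempty set $\mathbf{P}$ of propositional variables. $\mathcal{L}(\nabla,\bullet)$: $\phi::=p\mid\neg\phi\mid\phi\land\phi\mid\nabla\phi\mid\bullet\phi$. A frame is $\langle S,R\rangle$ with $S\neq\emptyset$, $R\subseteq S\times S$; a model based on it adds $V:\mathbf{P}\to\mathcal{P}(S)$. Truth: $\mathcal{M},s\vDash\nabla\phi$ iff there are $t,u$ with $sRt$, $sRu$, $\mathcal{M},t\vDash\phi$, $\mathcal{M},u\nvDash\phi$; $\mathcal{M},s\vDash\bullet\phi$ iff $\mathcal{M},s\vDash\phi$ and there is $t$ with $sRt$, $\mathcal{M},t\nvDash\phi$. $\mathcal{F}\vDash\phi$ means $\phi$ is true at every state of every model based on $\mathcal{F}$. Seriality: every state has an $R$-successor; reflexivity: $xRx$ for all $x$; Euclideanity: $xRy\land xRz\Rightarrow yRz$; convergency: $xRy\land xRz\Rightarrow\exists w(yRw\land zRw)$. *)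

From Stdlib Require Import Classical.

Inductive form (Var : Type) : Type :=
| FVar : Var -> form Var
| FNeg : form Var -> form Var
| FAnd : form Var -> form Var -> form Var
| FNabla : form Var -> form Var
| FBullet : form Var -> form Var.

Arguments FVar {Var} _.
Arguments FNeg {Var} _.
Arguments FAnd {Var} _ _.
Arguments FNabla {Var} _.
Arguments FBullet {Var} _.

Record frame : Type := Frame {
  state : Type;
  rel : state -> state -> Prop;
  state_inhabited : inhabited state
}.

Fixpoint sat {Var : Type} (F : frame) (V : Var -> state F -> Prop)
         (s : state F) (phi : form Var) : Prop :=
  match phi with
  | FVar p => V p s
  | FNeg a => ~ sat F V s a
  | FAnd a b => sat F V s a /\ sat F V s b
  | FNabla a => exists t u, rel F s t /\ rel F s u /\ sat F V t a /\ ~ sat F V u a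
  | FBullet a => sat F V s a /\ exists t, rel F s t /\ ~ sat F V t a
  end.

Definition frame_valid {Var : Type} (F : frame) (phi : form Var) : Prop :=
  forall (V : Var -> state F -> Prop) (s : state F), sat F V s phi.

Definition serial (F : frame) : Prop :=
  forall x, exists y, rel F x y.
Definition reflexive (F : frame) : Prop :=
  forall x, rel F x x.
Definition euclidean (F : frame) : Prop :=
  forall x y z, rel F x y -> rel F x z -> rel F y z.
Definition convergent (F : frame) : Prop :=
  forall x y z, rel F x y -> rel F x z -> exists w, rel F y w /\ rel F z w.

Definition definable {Var : Type} (P : frame -> Prop) : Prop :=
  exists phi : form Var, forall F : frame, frame_valid F phi <-> P F.

(* The modalities see only the successors of the current state, and they are
   trivially false at a state whose successors are among { s }: [nabla a] needs
   two successors disagreeing on [a], and [bullet a] needs a successor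
   disagreeing with [s] on [a]. Hence truth is unchanged when a reflexive loop
   is replaced by a dead end. Reflexivity and seriality are lost by turning
   the one-point reflexive frame into a dead end; Euclideanity and convergency
   are lost by the same surgery on the frame in which both points see [true]. *)

Lemma sat_nabla_bullet_loop {Var : Type} (F : frame) (V : Var -> state F -> Prop)
    (s : state F) (a : form Var) :
  (forall t, rel F s t -> t = s) ->
  ~ sat F V s (FNabla a) /\ ~ sat F V s (FBullet a).
Proof.
  intros Hloop; split.
  - intros (t & u & Rt & Ru & Ht & Hu).
    rewrite (Hloop t Rt) in Ht; rewrite (Hloop u Ru) in Hu; contradiction.
  - intros (Hs & t & Rt & Ht).
    rewrite (Hloop t Rt) in Ht; contradiction.
Qed.

Definition equal_off_loops {T : Type} (R1 R2 : T -> T -> Prop) : Prop :=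
  forall s, (forall t, R1 s t <-> R2 s t) \/
            ((forall t, R1 s t -> t = s) /\ (forall t, R2 s t -> t = s)).

Section EqualOffLoops.
Variables (T : Type) (i : inhabited T) (R1 R2 : T -> T -> Prop).
Hypothesis equiv12 : equal_off_loops R1 R2.

Lemma sat_equal_off_loops {Var : Type} (V : Var -> T -> Prop) (phi : form Var) (s : T) :
  sat (Frame T R1 i) V s phi <-> sat (Frame T R2 i) V s phi.
Proof.
  revert s; induction phi as [p|a IH|a IHa b IHb|a IH|a IH]; intro s.
  - reflexivity.
  - simpl; rewrite IH; reflexivity.
  - simpl; rewrite IHa, IHb; reflexivity.
  - destruct (equiv12 s) as [E|[L1 L2]].
    + simpl; split; intros (t & u & Huv); exists t, u;
        pose proof (E t); pose proof (E u); pose proof (IH t); pose proof (IH u); tauto.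
    + pose proof (sat_nabla_bullet_loop (Frame T R1 i) V s a L1).
      pose proof (sat_nabla_bullet_loop (Frame T R2 i) V s a L2).
      tauto.
  - destruct (equiv12 s) as [E|[L1 L2]].
    + simpl; split; intros (Hs & t & Ht); (split; [apply IH, Hs|]); exists t;
        pose proof (E t); pose proof (IH t); tauto.
    + pose proof (sat_nabla_bullet_loop (Frame T R1 i) V s a L1).
      pose proof (sat_nabla_bullet_loop (Frame T R2 i) V s a L2).
      tauto.
Qed.

Lemma frame_valid_equal_off_loops {Var : Type} (phi : form Var) :
  frame_valid (Frame T R1 i) phi -> frame_valid (Frame T R2 i) phi.
Proof. intros Hvalid V s; apply sat_equal_off_loops, Hvalid. Qed.

Lemma not_definable_equal_off_loops {Var : Type} (P : frame -> Prop) :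
  P (Frame T R1 i) -> ~ P (Frame T R2 i) -> ~ definable (Var:=Var) P.
Proof.
  intros HP1 HP2 [phi Hdef].
  apply HP2, Hdef, frame_valid_equal_off_loops, Hdef, HP1.
Qed.

End EqualOffLoops.

Lemma equal_off_loops_full_empty_unit :
  equal_off_loops (fun _ _ : unit => True) (fun _ _ => False).
Proof. intros [ ]; right; split; intros [ ] _; reflexivity. Qed.

Lemma equal_off_loops_to_true :
  equal_off_loops (fun _ b : bool => b = true) (fun a b => a = false /\ b = true).
Proof.
  intros [|].
  - right; split; [intros t Ht; exact Ht | intros t [Hf _]; discriminate].
  - left; intros t; split; [intros Ht; split; [reflexivity|exact Ht] | intros [_ Ht]; exact Ht].
Qed.

Theorem corollary1 (Var : Type) (p0 : Var) :
  ~ definable (Var:=Var) serial /\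
  ~ definable (Var:=Var) reflexive /\
  ~ definable (Var:=Var) euclidean /\
  ~ definable (Var:=Var) convergent.
Proof.
  pose proof (not_definable_equal_off_loops (Var:=Var) unit (inhabits tt) _ _
                equal_off_loops_full_empty_unit) as Hunit.
  pose proof (not_definable_equal_off_loops (Var:=Var) bool (inhabits true) _ _
                equal_off_loops_to_true) as Hbool.
  repeat split.
  - apply Hunit.
    + intros x; exists x; exact I.
    + intros Hserial; destruct (Hserial tt) as [_ [ ]].
  - apply Hunit.
    + intros x; exact I.
    + intros Hrefl; exact (Hrefl tt).
  - apply Hbool.
    + intros x y z _ Hz; exact Hz.
    + intros Heucl; destruct (Heucl false true true (conj eq_refl eq_refl)
                                (conj eq_refl eq_refl)) as [Hf _]; discriminate.
  - apply Hbool.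
    + intros x y z _ _; exists true; split; reflexivity.
    + intros Hconv; destruct (Hconv false true true (conj eq_refl eq_refl)
                                (conj eq_refl eq_refl)) as [w [[Hf _] _]]; discriminate.
Qed.
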